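(* For every real $x\ge 1$, $$\frac{\log x}{\zeta(2)}+1-\frac{\log 2}{\zeta(2)}\;<\;\sum_{n\le x}\frac{\varphi(n)}{n^2}\;\le\;\frac{\log x}{\zeta(2)}+1 .$$
   Context: $\varphi$ is Euler's totient function, $\zeta$ is the Riemann zeta function, $\log$ is the natural logarithm, and the sum runs over positive integers $n\le x$. *)

From Stdlib Require Import Reals.
From mathcomp Require Import ssreflect ssrnat prime.

Definition phi (n : nat) : nat := totient n.

Open Scope R_scope.

(* zeta(2) = sum_{n>=1} 1/n^2 ; index k corresponds to n = k+1. *)
Definition zeta2_series (k : nat) : R := / (INR (S k)) ^ 2.

Definition term (n : nat) : R := INR (phi n) / (INR n) ^ 2.

From Stdlib Require Import Reals Lra Lia QArith Qreals Qround.
From Coquelicot Require Import Coquelicot.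
From mathcomp Require Import all_boot cyclic zify.

(* With S(N) = sum_{n<=N} phi(n)/n^2 ([phi_sum]), s(N) = sum_{n<=N} 1/n^2 ([zeta2_sum]) and
   E(x) = zeta(2) S(floor x) - ln x ([error]), the claim is zeta(2) - ln 2 < E(x) <= zeta(2).
   Summing sum_{d|n} phi(d) = n against 1/n^2 gives sum_{n<=N} 1/n = sum_{m<=N} S(floor(N/m))/m^2,
   hence, for floor x = N,
     sum_{m<=N} E(x/m)/m^2 = D(N) - s(N) (ln x - ln N)
   with D(N) = zeta(2) sum_{n<=N} 1/n - s(N) ln N + sum_{n<=N} ln n/n^2 ([avg_error]).
   For N >= 60, D is nondecreasing and stays in [1.88, 1.895], so isolating the term m = 1 gives
   0.96 <= E(x) <= 1.34 by strong induction on floor x: the terms with m <= 20 satisfy this band by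
   induction, those with m > 20 only the weaker claimed bound, and the band lies inside
   (zeta(2) - ln 2, zeta(2)].  The cases 3 <= floor x < 60, the value D(60) and zeta(2) itself are
   certified by exact rational interval arithmetic, enclosing ln((n+1)/n) = 2 artanh(1/(2n+1)) by
   its Taylor expansion to fifth order; floor x in {1, 2} is checked by hand. *)

Local Open Scope nat_scope.

(** * Divisor sums of the totient *)

Lemma divn_divn n d : 0 < n -> d %| n -> n %/ (n %/ d) = d.
Proof.
move=> n_gt0 dvd_dn; have d_gt0 : 0 < d by apply: dvdn_gt0 dvd_dn.
by rewrite -{1}(divnK dvd_dn) mulKn // divn_gt0 // dvdn_leq.
Qed.

Lemma sum_totient_codivisors n :
  0 < n -> \sum_(d < n.+1 | d %| n) totient (n %/ d) = n.
Proof.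
move=> n_gt0; rewrite -[RHS]sum_totient_dvd.
pose co (d : 'I_n.+1) : 'I_n.+1 := inord (n %/ d).
have coE d : co d = n %/ d :> nat by rewrite inordK // ltnS leq_div.
have coK (d : 'I_n.+1) : d %| n -> co (co d) = d.
  by move=> dvd_dn; apply: val_inj; rewrite /= !coE divn_divn.
rewrite (reindex_onto co co) /=; last by move=> d /coK.
apply: eq_big => [d | d /andP[_ /eqP coKd]]; last by rewrite -coE coKd.
apply/andP/idP => [[dvd_co /eqP <-] | dvd_dn]; first by rewrite coE dvdn_div.
by rewrite coK // coE dvdn_div.
Qed.

Local Open Scope R_scope.

Fixpoint rsum (f : nat -> R) (n : nat) : R :=
  if n is k.+1 then rsum f k + f k.+1 else 0.

Lemma rsum0 f : rsum f 0 = 0.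
Proof. by []. Qed.

Lemma rsumS f n : rsum f n.+1 = rsum f n + f n.+1.
Proof. by []. Qed.

Lemma eq_rsum f g n :
  (forall m, (0 < m <= n)%N -> f m = g m) -> rsum f n = rsum g n.
Proof.
elim: n => [//|n IHn] efg /=.
by rewrite efg ?leqnn // IHn // => m ?; apply: efg; lia.
Qed.

Lemma rsum_ge0 f n : (forall m, (0 < m <= n)%N -> 0 <= f m) -> 0 <= rsum f n.
Proof.
elim: n => [|n IHn] f_ge0 /=; first exact: Rle_refl.
have := f_ge0 n.+1 (leqnn _); have : 0 <= rsum f n by apply: IHn => m ?; apply: f_ge0; lia.
lra.
Qed.

Lemma ler_rsum_from2 f g n : (0 < n)%N ->
  (forall m, (1 < m <= n)%N -> f m <= g m) -> rsum f n - f 1%N <= rsum g n - g 1%N.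
Proof.
elim: n => [//|[|n] IHn] _ lefg /=; first lra.
have := lefg n.+2 (leqnn _).
have : rsum f n.+1 - f 1%N <= rsum g n.+1 - g 1%N by apply: IHn => // m ?; apply: lefg; lia.
move=> /= ? ?; lra.
Qed.

Lemma rsum_tail f K n :
  rsum (fun m => if (K < m)%N then f m else 0) n = rsum f n - rsum f (minn K n).
Proof.
elim: n => [|n IHn]; first by rewrite minn0 /=; lra.
rewrite !rsumS IHn; case: (ltnP K n.+1) => [lt_Kn | le_nK].
  have le_Kn : (K <= n)%N by rewrite -ltnS.
  by rewrite (minn_idPl le_Kn); lra.
by rewrite (minn_idPr (ltnW le_nK)) rsumS; lra.
Qed.

Lemma rsumD f g n : rsum (fun m => f m + g m) n = rsum f n + rsum g n.
Proof. by elim: n => [|n IHn] /=; [lra | rewrite IHn; lra]. Qed.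

Lemma rsumZ c f n : rsum (fun m => c * f m) n = c * rsum f n.
Proof. by elim: n => [|n IHn] /=; [lra | rewrite IHn; lra]. Qed.

Lemma rsum_telescope f n : rsum (fun m => f m.+1 - f m) n = f n.+1 - f 1%N.
Proof. by elim: n => [|n IHn] /=; rewrite ?IHn; lra. Qed.

Lemma rsum_natr (g : nat -> nat) n :
  g 0%N = 0%N -> rsum (fun m => INR (g m)) n = INR (\sum_(m < n.+1) g m).
Proof.
move=> g0; elim: n => [|n IHn] /=; first by rewrite big_ord_recr big_ord0 /= g0.
by rewrite IHn [in RHS]big_ord_recr plus_INR.
Qed.

Lemma sum_f_R0_shift_rsum f n : sum_f_R0 (fun k => f (k + 1)%coq_nat) n = rsum f n.+1.
Proof. by elim: n => [|n /= ->]; rewrite /= ?Rplus_0_l // Nat.add_1_r. Qed.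

Lemma INR_gt0 n : (0 < n)%N -> 0 < INR n.
Proof. by move=> /ltP; apply: lt_0_INR. Qed.

(** * Partial sums of zeta(2) *)

Lemma inv_sq_sandwich n : (0 < n)%N ->
  / INR n - / INR n.+1 <= / INR n ^ 2 /\ / INR n.+1 ^ 2 <= / INR n - / INR n.+1.
Proof.
move=> /INR_gt0 n_gt0; rewrite S_INR.
have -> : / INR n - / (INR n + 1) = / (INR n * (INR n + 1)) by field; lra.
by split; apply: Rinv_le_contravar; nra.
Qed.

Lemma cv_inv_INR k : Un_cv (fun n => / INR (n + k.+1)) 0.
Proof.
move=> eps eps_gt0; have [M [M_eps M_gt0]] := archimed_cor1 eps eps_gt0.
exists M => n /leP le_Mn; rewrite /R_dist Rminus_0_r.
have n_pos : 0 < INR (n + k.+1) by apply: INR_gt0; lia.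
rewrite Rabs_pos_eq; last exact/Rlt_le/Rinv_0_lt_compat.
apply: Rle_lt_trans M_eps; apply: Rinv_le_contravar; first exact: lt_0_INR.
by apply: le_INR; apply/leP; lia.
Qed.

Definition zeta2_sum : nat -> R := rsum (fun n => / INR n ^ 2).

Lemma sum_f_R0_zeta2_series n : sum_f_R0 zeta2_series n = zeta2_sum n.+1.
Proof. by elim: n => [|n /= ->]; rewrite /zeta2_series /zeta2_sum /= ?Rplus_0_l. Qed.

Lemma zeta2_sum_bounds z (hz : infinite_sum zeta2_series z) N : (0 < N)%N ->
  zeta2_sum N + / INR N.+1 <= z <= zeta2_sum N + / INR N.
Proof.
(* [zeta2_sum n + 1 / (n + 1)] increases and [zeta2_sum n + 1 / n] decreases to [z]. *)
move=> N_gt0.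
have cv_sum_plus k : Un_cv (fun n => zeta2_sum n.+1 + / INR (n + k.+1)) z.
  rewrite -[z]Rplus_0_r; apply: CV_plus; last exact: cv_inv_INR.
  by move=> eps /hz [M HM]; exists M => n /HM; rewrite sum_f_R0_zeta2_series.
have zeta2_sumS n : zeta2_sum n.+2 = zeta2_sum n.+1 + / INR n.+2 ^ 2 by [].
case: N N_gt0 => [//|N] _; split.
- have := growing_ineq _ z _ (cv_sum_plus 1%N) N; rewrite addn2; apply=> n /=.
  rewrite !addn2 zeta2_sumS -!S_INR; have [lo _] := inv_sq_sandwich n.+2 isT; lra.
- have := decreasing_ineq _ z _ (cv_sum_plus 0%N) N; rewrite addn1; apply=> n /=.
  rewrite !addn1 zeta2_sumS -!S_INR; have [_ up] := inv_sq_sandwich n.+1 isT; lra.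
Qed.

(** * Logarithms of consecutive integers *)

Lemma le_of_derive_nonneg f df a b : a <= b ->
  (forall c, a <= c <= b -> is_derive f c (df c)) ->
  (forall c, a <= c <= b -> 0 <= df c) -> f a <= f b.
Proof.
move=> [a_lt_b | <-] f_df df_ge0; last exact: Rle_refl.
have [c [mvt c_ab]] : exists c, f b - f a = df c * (b - a) /\ a < c < b.
  by apply: MVT_cor2 => // c c_ab; apply/is_derive_Reals/f_df.
have := df_ge0 c (conj (Rlt_le _ _ c_ab.1) (Rlt_le _ _ c_ab.2)); nra.
Qed.

Lemma atanh2_lower t : 0 <= t < 1 ->
  2 * t + 2 / 3 * t ^ 3 + 2 / 5 * t ^ 5 <= ln (1 + t) - ln (1 - t).
Proof.
move=> t01.
set f := fun x => ln (1 + x) - ln (1 - x) - (2 * x + 2 / 3 * x ^ 3 + 2 / 5 * x ^ 5).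
suff : f 0 <= f t by rewrite /f Rplus_0_r Rminus_0_r ln_1; lra.
apply: (le_of_derive_nonneg f (fun x => 2 * x ^ 6 / (1 - x ^ 2))); first lra.
- move=> c c0t; rewrite /f; auto_derive; first (repeat split; lra).
  by field; repeat split; nra.
- move=> c c0t; apply: Rmult_le_pos; first nra.
  by apply/Rlt_le/Rinv_0_lt_compat; nra.
Qed.

Lemma atanh2_upper t : 0 <= t < 1 ->
  ln (1 + t) - ln (1 - t) <= 2 * t + 2 / 3 * t ^ 3 + 2 / 5 * t ^ 5 / (1 - t ^ 2).
Proof.
move=> t01.
set f := fun x => 2 * x + 2 / 3 * x ^ 3 + 2 / 5 * x ^ 5 / (1 - x ^ 2) - (ln (1 + x) - ln (1 - x)).
suff : f 0 <= f t by rewrite /f Rplus_0_r Rminus_0_r ln_1 /Rdiv; lra.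
apply: (le_of_derive_nonneg f (fun x => 4 / 5 * x ^ 6 / (1 - x ^ 2) ^ 2)); first lra.
- move=> c c0t; rewrite /f; auto_derive; first (repeat split; nra).
  by field; repeat split; nra.
- move=> c c0t; apply: Rmult_le_pos; first nra.
  have : 0 < 1 - c ^ 2 by nra.
  by move=> ?; apply/Rlt_le/Rinv_0_lt_compat; nra.
Qed.

Lemma ln_succ_sub_bounds n : (0 < n)%N ->
  let t := / INR (2 * n + 1) in
  2 * t + 2 / 3 * t ^ 3 + 2 / 5 * t ^ 5 <= ln (INR n.+1) - ln (INR n) <=
  2 * t + 2 / 3 * t ^ 3 + / (10 * INR n * INR n.+1) * t ^ 3.
Proof.
move=> /INR_gt0 n_gt0; cbv zeta.
have -> : INR (2 * n + 1) = 2 * INR n + 1 by rewrite plus_INR mult_INR /=; ring.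
rewrite S_INR; set t := / (2 * INR n + 1).
have t01 : 0 <= t < 1.
  split; first by apply/Rlt_le/Rinv_0_lt_compat; lra.
  by rewrite -Rinv_1; apply: Rinv_lt_contravar; lra.
have -> : ln (INR n + 1) - ln (INR n) = ln (1 + t) - ln (1 - t).
  rewrite -!ln_div; try lra; congr ln; rewrite /t; field; lra.
have [lo hi] := (atanh2_lower t t01, atanh2_upper t t01); split => //.
apply: (Rle_trans _ _ _ hi); apply: Req_le; rewrite /t; field; nra.
Qed.

Lemma ln_succ_sub_mid_trap n : (0 < n)%N ->
  2 / INR (2 * n + 1) <= ln (INR n.+1) - ln (INR n) <= (/ INR n + / INR n.+1) / 2.
Proof.
move=> n_gt0; have := ln_succ_sub_bounds n n_gt0; cbv zeta.
have n_pos := INR_gt0 n n_gt0.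
have -> : INR (2 * n + 1) = 2 * INR n + 1 by rewrite plus_INR mult_INR /=; ring.
rewrite S_INR /Rdiv; set t := / (2 * INR n + 1); set m := INR n * (INR n + 1).
have t_gt0 : 0 < t by apply: Rinv_0_lt_compat; lra.
have m_gt0 : 0 < m by rewrite /m; nra.
have t2m : t ^ 2 * (4 * m + 1) = 1 by rewrite /t /m; field; lra.
move=> [lo hi]; split; first by have := pow_lt t 3 t_gt0; have := pow_lt t 5 t_gt0; lra.
have -> : (/ INR n + / (INR n + 1)) * / 2 = 2 * t + t / (2 * m) by rewrite /t /m; field; lra.
have E : 2 * t + 2 / 3 * t ^ 3 + / (10 * INR n * (INR n + 1)) * t ^ 3
  = 2 * t + t / (2 * m) * (4 / 3 * m * t ^ 2 + t ^ 2 / 5) by rewrite /m; field; lra.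
rewrite E in hi.
suff : t / (2 * m) * (4 / 3 * m * t ^ 2 + t ^ 2 / 5) <= t / (2 * m) by lra.
rewrite -[X in _ <= X]Rmult_1_r; apply: Rmult_le_compat_l.
  by apply/Rlt_le/Rdiv_lt_0_compat; lra.
by have := pow2_ge_0 t; nra.
Qed.

(** * The weighted error identity *)

Definition phi_sum : nat -> R := rsum term.
Definition harmonic : nat -> R := rsum (fun n => / INR n).

Lemma phi_sum_ge0 N : 0 <= phi_sum N.
Proof.
apply: rsum_ge0 => m /andP[/INR_gt0 m_gt0 _]; rewrite /term.
by apply: Rdiv_le_0_compat; [apply: pos_INR | apply: pow_lt].
Qed.

Lemma rsum_totient_codivisors n : (0 < n)%N ->
  rsum (fun m => if (m %| n)%N then INR (phi (n %/ m)) else 0) n = INR n.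
Proof.
move=> n_gt0; rewrite (eq_rsum _ (fun m => INR (if (m %| n)%N then phi (n %/ m) else 0%N))).
  by rewrite rsum_natr -?big_mkcond ?sum_totient_codivisors // dvd0n gtn_eqF.
by move=> m _; case: ifP.
Qed.

Lemma phi_sum_divS N m : (0 < m)%N ->
  phi_sum (N.+1 %/ m) = phi_sum (N %/ m) + if (m %| N.+1)%N then term (N.+1 %/ m) else 0.
Proof.
by move=> m_gt0; rewrite divnS // /phi_sum; case: (m %| N.+1); rewrite /= ?Rplus_0_r.
Qed.

Lemma harmonic_eq_rsum_phi_sum N :
  harmonic N = rsum (fun m => phi_sum (N %/ m) / INR m ^ 2) N.
Proof.
elim: N => [//|N IHN].
have N1_gt0 := INR_gt0 N.+1 isT.
rewrite (eq_rsum _ (fun m => phi_sum (N %/ m) / INR m ^ 2 +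
    / INR N.+1 ^ 2 * if (m %| N.+1)%N then INR (phi (N.+1 %/ m)) else 0)); last first.
  move=> m /andP[/[dup] m_gt0 /INR_gt0 m_pos _]; rewrite phi_sum_divS //.
  case: ifP => [dvd_m | _]; last by field; lra.
  set q := (N.+1 %/ m)%N.
  have qm : INR q * INR m = INR N.+1 by rewrite -mult_INR multE divnK.
  have q_pos : 0 < INR q by have := pos_INR q; nra.
  by rewrite /term /phi -qm; field; lra.
rewrite rsumD rsumZ rsum_totient_codivisors // /harmonic !rsumS -/(harmonic N) IHN.
by rewrite divn_small // /phi_sum rsum0; field; lra.
Qed.

Definition log_sq_sum : nat -> R := rsum (fun n => ln (INR n) / INR n ^ 2).

Definition error (z : R) (N : nat) (x : R) : R := z * phi_sum N - ln x.

Definition avg_error (z : R) (N : nat) : R :=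
  z * harmonic N - zeta2_sum N * ln (INR N) + log_sq_sum N.

Lemma rsum_error_div z N x : 0 < x ->
  rsum (fun m => error z (N %/ m) (x / INR m) / INR m ^ 2) N
  = avg_error z N - zeta2_sum N * (ln x - ln (INR N)).
Proof.
move=> x_gt0; rewrite (eq_rsum _ (fun m => z * (phi_sum (N %/ m) / INR m ^ 2)
    + - ln x * / INR m ^ 2 + ln (INR m) / INR m ^ 2)); last first.
  move=> m /andP[/INR_gt0 m_gt0 _]; rewrite /error ln_div //; field; lra.
rewrite !rsumD !rsumZ -harmonic_eq_rsum_phi_sum /avg_error /zeta2_sum /log_sq_sum; ring.
Qed.

Lemma avg_error_succ_sub z N : avg_error z N.+1 - avg_error z N
  = z / INR N.+1 - zeta2_sum N * (ln (INR N.+1) - ln (INR N)).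
Proof.
have N1_gt0 := INR_gt0 N.+1 isT.
by rewrite /avg_error /harmonic /zeta2_sum /log_sq_sum !rsumS; field; lra.
Qed.

Lemma window_div N x m : (0 < m)%N -> INR N <= x < INR N + 1 ->
  INR (N %/ m) <= x / INR m < INR (N %/ m) + 1.
Proof.
move=> m_gt0 [Nx xN]; have m_pos := INR_gt0 m m_gt0.
have lo : INR (N %/ m) * INR m <= INR N.
  by rewrite -mult_INR; apply/le_INR/leP; rewrite multE leq_divM.
have hi : INR N + 1 <= (INR (N %/ m) + 1) * INR m.
  by rewrite -!S_INR -mult_INR; apply/le_INR/leP; rewrite multE ltn_ceil.
split; first by apply: (Rmult_le_reg_r (INR m)) => //; rewrite /Rdiv Rmult_assoc Rinv_l; lra.
by apply: (Rmult_lt_reg_r (INR m)) => //; rewrite /Rdiv Rmult_assoc Rinv_l; lra.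
Qed.

(** * Rational enclosures *)

Definition qn (n : nat) : Q := inject_Z (Z.of_nat n).

Lemma Q2R_qn n : Q2R (qn n) = INR n.
Proof. by rewrite /qn /Q2R /= INR_IZR_INZ Rinv_1 Rmult_1_r. Qed.

Lemma Q2R_inv_ne0 q : Q2R q <> 0 -> Q2R (/ q) = / Q2R q.
Proof. by move=> q_ne0; apply: Q2R_inv => /Qeq_eqR q0; apply: q_ne0; rewrite q0 /Q2R /=; ring. Qed.

Lemma Q2R_inv_qn n : (0 < n)%N -> Q2R (/ qn n) = / INR n.
Proof. by move=> /INR_gt0 n_gt0; rewrite Q2R_inv_ne0 Q2R_qn //; lra. Qed.

Lemma Q2R_make a b : Q2R (a # b) = IZR a / IZR (Zpos b).
Proof. by []. Qed.

Lemma Q2R_le q r : Qle_bool q r = true -> Q2R q <= Q2R r.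
Proof. by move=> /Qle_bool_iff; apply: Qle_Rle. Qed.

Lemma Q2R_inject_Z z : Q2R (inject_Z z) = IZR z.
Proof. by rewrite /Q2R /= Rinv_1 Rmult_1_r. Qed.

(* Rounding every partial sum to a multiple of [1 / prec] keeps the certificates small. *)
Definition prec : positive := 1000000000000.

Definition Qdown (q : Q) : Q := Qfloor (q * inject_Z (Zpos prec)) # prec.
Definition Qup (q : Q) : Q := Qceiling (q * inject_Z (Zpos prec)) # prec.

Lemma Q2R_Qdown q : Q2R (Qdown q) <= Q2R q.
Proof.
have := Qle_Rle _ _ (Qfloor_le (q * inject_Z (Zpos prec))).
rewrite /Qdown; set k := Qfloor _; rewrite Q2R_mult !Q2R_inject_Z => le_kq.
have p_gt0 : 0 < IZR (Zpos prec) by apply: IZR_lt.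
rewrite [Q2R (k # prec)]/Q2R /=; apply: (Rmult_le_reg_r _ _ _ p_gt0).
by rewrite Rmult_assoc Rinv_l; lra.
Qed.

Lemma Q2R_Qup q : Q2R q <= Q2R (Qup q).
Proof.
have := Qle_Rle _ _ (Qle_ceiling (q * inject_Z (Zpos prec))).
rewrite /Qup; set k := Qceiling _; rewrite Q2R_mult !Q2R_inject_Z => le_qk.
have p_gt0 : 0 < IZR (Zpos prec) by apply: IZR_lt.
rewrite [Q2R (k # prec)]/Q2R /=; apply: (Rmult_le_reg_r _ _ _ p_gt0).
by rewrite Rmult_assoc Rinv_l; lra.
Qed.

Fixpoint qsum_down (f : nat -> Q) (n : nat) : Q :=
  if n is k.+1 then Qdown (qsum_down f k + f k.+1) else 0.

Fixpoint qsum_up (f : nat -> Q) (n : nat) : Q :=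
  if n is k.+1 then Qup (qsum_up f k + f k.+1) else 0.

Definition encloses (lo hi : nat -> Q) (f : nat -> R) : Prop :=
  forall n, (0 < n)%N -> Q2R (lo n) <= f n <= Q2R (hi n).

Lemma rsum_enclosed lo hi f : encloses lo hi f ->
  forall n, Q2R (qsum_down lo n) <= rsum f n <= Q2R (qsum_up hi n).
Proof.
move=> f_enc; elim=> [|n [IHlo IHhi]]; first by rewrite /= /Q2R /=; lra.
have [lo_f f_hi] := f_enc n.+1 isT.
have := Q2R_Qdown (qsum_down lo n + lo n.+1); have := Q2R_Qup (qsum_up hi n + hi n.+1).
by rewrite /= !Q2R_plus; lra.
Qed.

Lemma encloses_rsum lo hi f :
  encloses lo hi f -> encloses (qsum_down lo) (qsum_up hi) (rsum f).
Proof. by move=> f_enc n _; apply: rsum_enclosed. Qed.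

Lemma encloses_exact q f : (forall n, (0 < n)%N -> Q2R (q n) = f n) -> encloses q q f.
Proof. by move=> qf n /qf ->; lra. Qed.

Definition qinv_sq (n : nat) : Q := / (qn n * qn n).

Lemma Q2R_qinv_sq n : (0 < n)%N -> Q2R (qinv_sq n) = / INR n ^ 2.
Proof.
move=> /INR_gt0 n_gt0; have -> : INR n ^ 2 = INR n * INR n by ring.
by rewrite /qinv_sq Q2R_inv_ne0 Q2R_mult Q2R_qn //; nra.
Qed.

Definition ln_step_lo (k : nat) : Q :=
  let t := (/ qn (2 * k + 1)%N)%Q in
  (2 * t + (2 # 3) * (t * t * t) + (2 # 5) * (t * t * t * t * t))%Q.
Definition ln_step_hi (k : nat) : Q :=
  let t := (/ qn (2 * k + 1)%N)%Q in
  (2 * t + (2 # 3) * (t * t * t) + / (10 * (qn k * qn k.+1)) * (t * t * t))%Q.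

Lemma ln_step_encloses :
  encloses ln_step_lo ln_step_hi (fun k => ln (INR k.+1) - ln (INR k)).
Proof.
move=> k k_gt0; have k_pos := INR_gt0 k k_gt0; have k1_pos := INR_gt0 k.+1 isT.
have [lo hi] := ln_succ_sub_bounds k k_gt0.
have c2 : Q2R 2 = 2 by rewrite /Q2R /=; lra.
have c10 : Q2R 10 = 10 by rewrite /Q2R /=; lra.
rewrite /ln_step_lo /ln_step_hi !Q2R_plus !Q2R_mult Q2R_inv_qn; last lia.
rewrite Q2R_inv_ne0; last by rewrite !Q2R_mult !Q2R_qn c10; nra.
rewrite !Q2R_mult !Q2R_qn c2 c10 !Q2R_make -!Rmult_assoc; lra.
Qed.

Definition ln_lo (n : nat) : Q := qsum_down ln_step_lo n.-1.
Definition ln_hi (n : nat) : Q := qsum_up ln_step_hi n.-1.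

Lemma ln_encloses : encloses ln_lo ln_hi (fun n => ln (INR n)).
Proof.
case=> [//|k] _; have := rsum_enclosed _ _ _ ln_step_encloses k.
by rewrite (rsum_telescope (fun m => ln (INR m))) /= ln_1 Rminus_0_r.
Qed.

Definition phi_sum_lo := qsum_down (fun n => qn (phi n) * qinv_sq n)%Q.
Definition phi_sum_hi := qsum_up (fun n => qn (phi n) * qinv_sq n)%Q.
Definition harmonic_lo := qsum_down (fun n => / qn n)%Q.
Definition harmonic_hi := qsum_up (fun n => / qn n)%Q.
Definition zeta2_sum_lo := qsum_down qinv_sq.
Definition zeta2_sum_hi := qsum_up qinv_sq.
Definition log_sq_sum_lo := qsum_down (fun n => ln_lo n * qinv_sq n)%Q.
Definition log_sq_sum_hi := qsum_up (fun n => ln_hi n * qinv_sq n)%Q.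

Lemma phi_sum_encloses : encloses phi_sum_lo phi_sum_hi phi_sum.
Proof.
apply/encloses_rsum/encloses_exact => n n_gt0.
by rewrite Q2R_mult Q2R_qn Q2R_qinv_sq.
Qed.

Lemma harmonic_encloses : encloses harmonic_lo harmonic_hi harmonic.
Proof. exact/encloses_rsum/encloses_exact/Q2R_inv_qn. Qed.

Lemma zeta2_sum_encloses : encloses zeta2_sum_lo zeta2_sum_hi zeta2_sum.
Proof. exact/encloses_rsum/encloses_exact/Q2R_qinv_sq. Qed.

Lemma log_sq_sum_encloses : encloses log_sq_sum_lo log_sq_sum_hi log_sq_sum.
Proof.
apply: encloses_rsum => n n_gt0; have [lo hi] := ln_encloses n n_gt0.
have inv_gt0 : 0 < / INR n ^ 2 by apply/Rinv_0_lt_compat/pow_lt/INR_gt0.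
rewrite !Q2R_mult Q2R_qinv_sq //; split; apply: Rmult_le_compat_r; lra.
Qed.

Lemma encloses_certify lo hi f n (a b : Q) : encloses lo hi f -> (0 < n)%N ->
  Qle_bool a (lo n) && Qle_bool (hi n) b = true -> Q2R a <= f n <= Q2R b.
Proof.
move=> f_enc n_gt0 /andP[/Q2R_le a_lo /Q2R_le hi_b].
by have := f_enc n n_gt0; lra.
Qed.

Lemma zeta2_sum_60 : 1.6284 <= zeta2_sum 60 <= 1.62841.
Proof.
have := encloses_certify _ _ _ 60 (16284 # 10000) (162841 # 100000) zeta2_sum_encloses isT.
rewrite !Q2R_make; apply; vm_compute; reflexivity.
Qed.

Lemma harmonic_60 : 4.67987 <= harmonic 60 <= 4.67988.
Proof.
have := encloses_certify _ _ _ 60 (467987 # 100000) (467988 # 100000) harmonic_encloses isT.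
rewrite !Q2R_make; apply; vm_compute; reflexivity.
Qed.

Lemma ln_60 : 4.0941 <= ln 60 <= 4.0945.
Proof.
have := encloses_certify _ _ _ 60 (40941 # 10000) (40945 # 10000) ln_encloses isT.
rewrite !Q2R_make INR_IZR_INZ; apply; vm_compute; reflexivity.
Qed.

Lemma log_sq_sum_60 : 0.8531 <= log_sq_sum 60 <= 0.8533.
Proof.
have := encloses_certify _ _ _ 60 (8531 # 10000) (8533 # 10000) log_sq_sum_encloses isT.
rewrite !Q2R_make; apply; vm_compute; reflexivity.
Qed.

Definition base_certificate (N : nat) : bool :=
  Qle_bool (96 # 100) ((16447 # 10000) * phi_sum_lo N - ln_hi N.+1)
  && Qle_bool ((16451 # 10000) * phi_sum_hi N - ln_lo N) (134 # 100).

Lemma base_certificate_3_59 : all base_certificate (iota 3 57).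
Proof. vm_compute; reflexivity. Qed.

Lemma phi_sum_ln_bounds N : (3 <= N < 60)%N ->
  0.96 <= 1.6447 * phi_sum N - ln (INR N.+1) /\ 1.6451 * phi_sum N - ln (INR N) <= 1.34.
Proof.
move=> N_range; have N_gt0 : (0 < N)%N by lia.
have /andP[/Q2R_le lo /Q2R_le hi] : base_certificate N.
  by apply: (allP base_certificate_3_59); rewrite mem_iota; lia.
move: lo hi; rewrite !Q2R_minus !Q2R_mult !Q2R_make.
have := phi_sum_encloses N N_gt0; have := ln_encloses N N_gt0; have := ln_encloses N.+1 isT.
lra.
Qed.

(** * Bounds on the error term *)

Lemma ln2_bounds : 0.69 <= ln 2 <= 0.7.
Proof.
have := ln_succ_sub_bounds 1 isT; cbv zeta; rewrite !INR_IZR_INZ /= ln_1.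
lra.
Qed.

Lemma ln3_sub_ln2 : ln 3 - ln 2 <= 0.41.
Proof.
have := ln_succ_sub_bounds 2 isT; cbv zeta; rewrite !INR_IZR_INZ /=.
lra.
Qed.

Lemma INR_ge60 N : (60 <= N)%N -> 60 <= INR N.
Proof. by move=> /leP /le_INR; rewrite INR_IZR_INZ. Qed.

Lemma ln_window N x : (0 < N)%N -> INR N <= x < INR N + 1 ->
  ln (INR N) <= ln x < ln (INR N.+1).
Proof.
move=> /INR_gt0 N_gt0 [Nx xN]; rewrite S_INR.
by split; [apply: ln_le | apply: ln_increasing]; lra.
Qed.

Section ErrorBounds.

Variable z : R.
Hypothesis hz : infinite_sum zeta2_series z.

Lemma zeta2_bounds : 1.6447 <= z <= 1.6451.
Proof.
have := zeta2_sum_bounds z hz 60 isT; have := zeta2_sum_60.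
have -> : INR 60 = 60 by rewrite INR_IZR_INZ.
have -> : INR 61 = 61 by rewrite INR_IZR_INZ.
lra.
Qed.

Lemma wide_of_narrow v : 0.96 <= v <= 1.34 -> z - ln 2 < v <= z.
Proof. by have := zeta2_bounds; have := ln2_bounds; lra. Qed.

Lemma error_wide_small N x : (0 < N < 3)%N -> INR N <= x < INR N + 1 ->
  z - ln 2 < error z N x <= z.
Proof.
have := zeta2_bounds; have := ln2_bounds; have := ln3_sub_ln2.
move=> ln32 ln2 zb N_range; have : N = 1%N \/ N = 2%N by lia.
case=> -> [Nx xN]; rewrite /error /phi_sum /= /term /phi /= in Nx xN *.
- have := ln_increasing x 2; have := ln_le 1 x; rewrite ln_1; lra.
- have := ln_increasing x 3; have := ln_le 2 x; lra.
Qed.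

Lemma error_narrow_base N x : (3 <= N < 60)%N -> INR N <= x < INR N + 1 ->
  0.96 <= error z N x <= 1.34.
Proof.
move=> N_range hx; have [lo hi] := phi_sum_ln_bounds N N_range.
have := ln_window N x ltac:(lia) hx; have := zeta2_bounds.
have := phi_sum_ge0 N; rewrite /error; nra.
Qed.

Lemma avg_error_succ_bounds N : (60 <= N)%N ->
  0 <= avg_error z N.+1 - avg_error z N <= (/ INR N - / INR N.+1) / 4.
Proof.
move=> N60; have N_gt0 : (0 < N)%N by lia.
have n60 := INR_ge60 N N60.
have [s_lo s_hi] := zeta2_sum_bounds z hz N N_gt0.
have [d_lo d_hi] := ln_succ_sub_mid_trap N N_gt0.
have zb := zeta2_bounds; rewrite avg_error_succ_sub.
have E : INR (2 * N + 1) = 2 * INR N + 1 by rewrite plus_INR mult_INR /=; ring.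
rewrite E S_INR in d_lo d_hi s_lo *; move: d_lo d_hi s_lo s_hi n60.
set n := INR N; set d := ln _ - ln _; set s := zeta2_sum N => d_lo d_hi s_lo s_hi n60.
have inv_n : / n <= / 60 by apply: Rinv_le_contravar; lra.
have mid_gt0 : 0 < 2 / (2 * n + 1) by apply: Rdiv_lt_0_compat; lra.
split.
- have : s * d <= (z - / (n + 1)) * ((/ n + / (n + 1)) / 2).
    by apply: Rmult_le_compat; lra.
  have E1 : z / (n + 1) - (z - / (n + 1)) * ((/ n + / (n + 1)) / 2)
    = ((2 - z) * n + 1 - z) / (2 * n * (n + 1) ^ 2) by field; lra.
  have : 0 <= ((2 - z) * n + 1 - z) / (2 * n * (n + 1) ^ 2).
    by apply: Rdiv_le_0_compat; nra.
  lra.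
- have : (z - / n) * (2 / (2 * n + 1)) <= s * d by apply: Rmult_le_compat; lra.
  have E2 : (/ n - / (n + 1)) / 4 - (z / (n + 1) - (z - / n) * (2 / (2 * n + 1)))
    = ((z - 3 / 2) * n - 7 / 4) / (n * (n + 1) * (2 * n + 1)) by field; lra.
  have : 0 <= ((z - 3 / 2) * n - 7 / 4) / (n * (n + 1) * (2 * n + 1)).
    by apply: Rdiv_le_0_compat; nra.
  lra.
Qed.

Lemma avg_error_60 : 1.88 <= avg_error z 60 <= 1.89.
Proof.
have [s_lo s_hi] := zeta2_sum_bounds z hz 60 isT.
have E61 : INR 61 = 61 by rewrite INR_IZR_INZ.
have E60 : INR 60 = 60 by rewrite INR_IZR_INZ.
rewrite /avg_error E60; rewrite E61 in s_lo; rewrite E60 in s_hi.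
have [z_lo z_hi] := zeta2_bounds; have [H_lo H_hi] := harmonic_60.
have [L_lo L_hi] := ln_60; have := log_sq_sum_60.
have : 1.6447 * 4.67987 <= z * harmonic 60 <= 1.6451 * 4.67988.
  by split; apply: Rmult_le_compat; lra.
have : (1.6447 - / 60) * 4.0941 <= zeta2_sum 60 * ln 60 <= (1.6451 - / 61) * 4.0945.
  by split; apply: Rmult_le_compat; lra.
lra.
Qed.

Lemma avg_error_bounds N : (60 <= N)%N -> 1.88 <= avg_error z N <= 1.89 + / 240.
Proof.
move=> /subnKC <-; set k := (N - 60)%N.
suff : avg_error z 60 <= avg_error z (60 + k) <= avg_error z 60 + (/ 60 - / INR (60 + k)) / 4.
  have : 0 < / INR (60 + k) by apply/Rinv_0_lt_compat/INR_gt0; lia.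
  by have := avg_error_60; lra.
elim: k => [|k IHk]; first by rewrite addn0 (_ : INR 60 = 60) ?INR_IZR_INZ //; lra.
by have := avg_error_succ_bounds (60 + k) (leq_addr _ _); rewrite addnS; lra.
Qed.

Lemma error_tail_sum_bounds N x : (60 <= N)%N ->
  (forall m, (1 < m <= N)%N ->
     0.9 <= error z (N %/ m) (x / INR m) <= if (m <= 20)%N then 1.34 else z) ->
  let g m := error z (N %/ m) (x / INR m) / INR m ^ 2 in
  0.9 * (zeta2_sum N - 1) <= rsum g N - g 1%N <= 1.34 * (zeta2_sum N - 1) + (z - 1.34) / 20.
Proof.
move=> N60 e_bounds g; have zb := zeta2_bounds.
have inv_sq_gt0 m : (0 < m)%N -> 0 < / INR m ^ 2.
  by move=> /INR_gt0 m_gt0; apply/Rinv_0_lt_compat/pow_lt.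
have inv_sq1 : / INR 1 ^ 2 = 1 by rewrite [INR 1]/= pow1 Rinv_1.
split.
- have : rsum (fun m => 0.9 * / INR m ^ 2) N - 0.9 * / INR 1 ^ 2 <= rsum g N - g 1%N.
    apply: ler_rsum_from2 => [|m m_range]; first lia.
    have [lo _] := e_bounds m m_range; have := inv_sq_gt0 m ltac:(lia).
    by rewrite /g /Rdiv; nra.
  by rewrite rsumZ -/(zeta2_sum N) inv_sq1; lra.
- set w := fun m => 1.34 * / INR m ^ 2 + (z - 1.34) * (if (20 < m)%N then / INR m ^ 2 else 0).
  have : rsum g N - g 1%N <= rsum w N - w 1%N.
    apply: ler_rsum_from2 => [|m m_range]; first lia.
    have [_ hi] := e_bounds m m_range; have := inv_sq_gt0 m ltac:(lia).
    by rewrite /g /w /Rdiv; case: leqP hi => _ hi; nra.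
  rewrite /w rsumD !rsumZ rsum_tail (minn_idPl (_ : 20 <= N)%N) -?/(zeta2_sum _); last lia.
  rewrite inv_sq1 /=.
  have [sN_lo _] := zeta2_sum_bounds z hz N ltac:(lia).
  have [_ s20_hi] := zeta2_sum_bounds z hz 20 isT.
  have : 0 < / INR N.+1 by apply/Rinv_0_lt_compat/INR_gt0.
  rewrite (_ : INR 20 = 20) in s20_hi; last by rewrite INR_IZR_INZ.
  move=> ?; have : (z - 1.34) * (zeta2_sum N - zeta2_sum 20) <= (z - 1.34) * / 20.
    by apply: Rmult_le_compat_l; lra.
  lra.
Qed.

Lemma error_narrow_step N x : (60 <= N)%N -> INR N <= x < INR N + 1 ->
  (forall m, (1 < m <= N)%N ->
     0.9 <= error z (N %/ m) (x / INR m) <= if (m <= 20)%N then 1.34 else z) ->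
  0.96 <= error z N x <= 1.34.
Proof.
move=> N60 hx e_bounds; have N_gt0 : (0 < N)%N by lia.
have N_pos := INR_gt0 N N_gt0; have x_gt0 : 0 < x by lra.
have := error_tail_sum_bounds N x N60 e_bounds; cbv zeta.
rewrite rsum_error_div // divn1 [INR 1]/= pow1 !Rdiv_1_r.
have zb := zeta2_bounds; have [D_lo D_hi] := avg_error_bounds N N60.
have [s_lo s_hi] := zeta2_sum_bounds z hz N N_gt0.
have [lnx_lo lnx_hi] := ln_window N x N_gt0 hx.
have [_ d_hi] := ln_succ_sub_mid_trap N N_gt0.
have inv_N : / INR N <= / 60 by apply: Rinv_le_contravar; [lra | apply: INR_ge60].
have inv_N1 : 0 < / INR N.+1 <= / INR N.
  rewrite S_INR; split; [apply: Rinv_0_lt_compat | apply: Rinv_le_contravar]; lra.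
have : 0 <= zeta2_sum N * (ln x - ln (INR N)) <= z * / 60.
  by split; [apply: Rmult_le_pos | apply: Rmult_le_compat]; lra.
lra.
Qed.

Lemma error_narrow N x : (3 <= N)%N -> INR N <= x < INR N + 1 ->
  0.96 <= error z N x <= 1.34.
Proof.
elim/ltn_ind: N x => N IHN x N3 hx.
case: (ltnP N 60) => [N60 | N60]; first by apply: (error_narrow_base N x _ hx); lia.
apply: error_narrow_step => // m m_range.
have hxm := window_div N x m ltac:(lia) hx.
have N'_lt : (N %/ m < N)%N by apply: ltn_Pdiv; lia.
have := zeta2_bounds; have := ln2_bounds.
case: (ltnP (N %/ m) 3) => [N'_lt3 | N'_ge3].
- have N'_gt0 : (0 < N %/ m)%N by rewrite divn_gt0; lia.
  have m_gt20 : (20 < m)%N by nia.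
  have := error_wide_small _ _ (introT andP (conj N'_gt0 N'_lt3)) hxm.
  rewrite leqNgt m_gt20 /=; lra.
- have := IHN _ N'_lt _ N'_ge3 hxm; case: leqP; lra.
Qed.

Lemma error_wide N x : (0 < N)%N -> INR N <= x < INR N + 1 ->
  z - ln 2 < error z N x <= z.
Proof.
move=> N_gt0 hx; case: (ltnP N 3) => [N_lt3 | N_ge3].
  by apply: error_wide_small hx; rewrite N_gt0.
exact/wide_of_narrow/(error_narrow N x N_ge3 hx).
Qed.

End ErrorBounds.

Theorem lemma2p3 (x : R) (hx : 1 <= x) (N : nat)
    (hN : INR N <= x < INR N + 1)
    (z : R) (hz : infinite_sum zeta2_series z) :
  ln x / z + 1 - ln 2 / z < sum_f 1 N term /\
  sum_f 1 N term <= ln x / z + 1.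
Proof.
have N_gt0 : (0 < N)%N by case: N hN => [|N] //=; lra.
have [lo hi] := error_wide z hz N x N_gt0 hN.
have z_gt0 : 0 < z by have := zeta2_bounds z hz; lra.
have -> : sum_f 1 N term = phi_sum N.
  by case: N N_gt0 {hN lo hi} => [//|N] _; rewrite /sum_f Nat.sub_1_r sum_f_R0_shift_rsum.
move: lo hi; rewrite /error => lo hi.
rewrite (_ : ln x / z + 1 - ln 2 / z = (ln x + z - ln 2) / z); last by field; lra.
rewrite (_ : ln x / z + 1 = (ln x + z) / z); last by field; lra.
split; [apply: (Rmult_lt_reg_r z) | apply: (Rmult_le_reg_r z)] => //;
  rewrite /Rdiv Rmult_assoc Rinv_l; lra.
Qed.
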